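(* Let $b\ge 2$ and let $N$ be a $b$-wARH number with $k$ base-$b$ digits and with additive extra term $A$. Then $k\le A+4$.
   Context: Fix a base $b\ge 2$. $s_b(N)$ is the sum of the base-$b$ digits of $N$. For a positive integer $X$, its reversal $X^R$ is the integer whose base-$b$ representation is that of $X$ written in reverse order (leading zeros of the result are dropped). A positive integer $N$ is a $b$-wARH number if there exists an integer $A\ge 0$, called an additive extra term of $N$, such that $N=(A+s_b(N))+(A+s_b(N))^R$. *)

From mathcomp Require Import all_boot.
Set Implicit Arguments. Unset Strict Implicit. Unset Printing Implicit Defensive.

(* Base-b digits of n, least significant first; digits b 0 = [::].
   The fuel n suffices since n %/ b < n for n > 0, b >= 2. *)
Fixpoint digits_aux (fuel b n : nat) : seq nat :=
  match fuel with
  | 0 => [::]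
  | fuel'.+1 => if n == 0 then [::] else (n %% b) :: digits_aux fuel' b (n %/ b)
  end.

Definition digits (b n : nat) : seq nat := digits_aux n b n.

Definition from_digits (b : nat) (s : seq nat) : nat :=
  foldr (fun d acc => d + b * acc) 0 s.

Definition digsum (b n : nat) : nat := sumn (digits b n).

(* X^R: digits written in reverse order; leading zeros of the result are
   automatically dropped by evaluating the reversed digit string. *)
Definition rev_num (b n : nat) : nat := from_digits b (rev (digits b n)).

Definition is_extra_term (b N A : nat) : Prop :=
  N = (A + digsum b N) + rev_num b (A + digsum b N).

Definition wARH (b N : nat) : Prop := 0 < N /\ exists A, is_extra_term b N A.

From mathcomp Require Import all_boot.
From mathcomp Require Import zify.

Set Implicit Arguments.
Unset Strict Implicit.

(* Write X = A + s_b(N), so that N = X + X^R, and let k and m be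
   the numbers of base-b digits of N and of X.
   - Reversing a string of m digits gives a number below b^m, hence
     N < 2 b^m <= b^(m+1) and therefore k <= m + 1.
   - Each of the k digits of N is at most b - 1, so X <= A + (b-1) k.
   - X has m digits, so b^(m-1) <= X, and with k <= m + 1 this gives
     b^(k-2) <= A + (b-1) k.
   If k >= A + 5 then A + (b-1) k <= b k - 5, and this contradicts the
   growth estimate b k < b^(k-2) + 5 for k >= 5 (linear versus exponential). *)

Section Digits.

Variable b : nat.
Hypothesis b_ge2 : 2 <= b.

Lemma digits_lt_base (n : nat) : all (fun d => d < b) (digits b n).
Proof.
suff H : forall f n, all (fun d => d < b) (digits_aux f b n) by exact: H.
elim=> [|f IH] {}n //=.
by case: (n == 0) => //=; rewrite IH andbT ltn_mod; lia.
Qed.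

Lemma digits_size_upper (n : nat) : n < b ^ size (digits b n).
Proof.
suff H : forall f n, n <= f -> n < b ^ size (digits_aux f b n) by exact: H.
elim=> [|f IH] {}n /=; first by rewrite leqn0 => /eqP ->.
move=> n_le; case: posnP => [->//|n_gt0] /=.
have := IH (n %/ b) ltac:(have := ltn_Pdiv b_ge2 n_gt0; lia).
set s := size _ => ub_div.
have mod_lt : n %% b < b by rewrite ltn_mod; lia.
rewrite expnS {1}(divn_eq n b).
have := leq_mul (leqnn b) ub_div; nia.
Qed.

Lemma digits_size_lower (n : nat) : 0 < n -> b ^ (size (digits b n)).-1 <= n.
Proof.
suff H : forall f n, n <= f -> 0 < n -> b ^ (size (digits_aux f b n)).-1 <= n.
  exact: H.
elim=> [|f IH] {}n /=; first by lia.
move=> n_le n_gt0; rewrite (negbTE (lt0n_neq0 n_gt0)) /=.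
have div_lt := ltn_Pdiv b_ge2 n_gt0.
case: (posnP (n %/ b)) => [div0|div_gt0].
  suff -> : digits_aux f b (n %/ b) = [::] by rewrite expn0.
  by case: f {IH n_le div_lt} => //= f; rewrite div0.
have := IH (n %/ b) ltac:(lia) div_gt0.
case: (digits_aux f b (n %/ b)) => [|x s] /=; first by rewrite expn0; lia.
move=> lb_div; rewrite expnS.
have := leq_mul (leqnn b) lb_div.
have := leq_divM n b; rewrite mulnC; lia.
Qed.

Lemma size_digits_le (n e : nat) : n < b ^ e -> size (digits b n) <= e.
Proof.
case: (posnP n) => [->|n_gt0 n_lt]; first by rewrite /digits.
have : b ^ (size (digits b n)).-1 < b ^ e.
  by apply: leq_ltn_trans n_lt; apply: digits_size_lower.
by rewrite ltn_exp2l; lia.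
Qed.

Lemma from_digits_lt (s : seq nat) :
  all (fun d => d < b) s -> from_digits b s < b ^ size s.
Proof.
elim: s => [|d s IH] //= /andP [d_lt s_lt].
have := leq_mul (leqnn b) (IH s_lt); rewrite expnS; nia.
Qed.

Lemma rev_num_lt (n : nat) : rev_num b n < b ^ size (digits b n).
Proof.
rewrite /rev_num -(size_rev (digits b n)); apply: from_digits_lt.
by rewrite all_rev digits_lt_base.
Qed.

Lemma digsum_le (n : nat) : digsum b n <= (b - 1) * size (digits b n).
Proof.
rewrite /digsum; elim: (digits b n) (digits_lt_base n) => [|d s IH] //=.
by move=> /andP [d_lt /IH]; rewrite mulnS; lia.
Qed.

Lemma linear_lt_exp (k : nat) : 5 <= k -> b * k < b ^ (k - 2) + 5.
Proof.
move=> k_ge5; have [j ->] : exists j, k = j + 5 by exists (k - 5); lia.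
elim: j => [|j IH].
  by rewrite (_ : 0 + 5 - 2 = 3) // !expnS expn0 muln1; nia.
have -> : j.+1 + 5 - 2 = (j + 5 - 2).+1 by lia.
have pow_ge : b <= b ^ (j + 5 - 2) by rewrite -{1}(expn1 b) leq_exp2l; lia.
have : 2 * b ^ (j + 5 - 2) <= b * b ^ (j + 5 - 2) by apply: leq_mul.
by rewrite expnS; lia.
Qed.

End Digits.

Theorem mainTheorem17 (b N A : nat) :
  2 <= b -> 0 < N -> is_extra_term b N A ->
  size (digits b N) <= A + 4.
Proof.
rewrite /is_extra_term => b_ge2 N_gt0.
set X := A + digsum b N => N_eq.
set k := size (digits b N); set m := size (digits b X).
have X_gt0 : 0 < X.
  by case: (posnP X) N_eq => // ->; rewrite /rev_num /digits /=; lia.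
have k_le : k <= m.+1.
  apply: (size_digits_le b_ge2); rewrite expnS.
  have := digits_size_upper b_ge2 X; have := rev_num_lt b_ge2 X.
  have : 2 * b ^ m <= b * b ^ m by apply: leq_mul.
  rewrite -/m; lia.
have X_lower := digits_size_lower b_ge2 X_gt0.
have X_upper : X <= A + (b - 1) * k by rewrite leq_add2l digsum_le.
(* If k >= A + 5, then b^(k-2) <= b^(m-1) <= X <= b k - 5 < b^(k-2). *)
rewrite leqNgt; apply/negP => k_gt.
have pow_le : b ^ (k - 2) <= b ^ m.-1 by rewrite leq_exp2l; lia.
have k_ge5 : 5 <= k by lia.
have growth := linear_lt_exp b_ge2 k_ge5.
have split_bk : (b - 1) * k + k = b * k.
  by rewrite addnC -mulSn subn1 prednK // ltnW.
rewrite -/m in X_lower; lia.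
Qed.
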